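(* Let $x,y\in S^1\cap\mathbb{H}^2$ be distinct, with $\{x_*,y_*\}=\{-1,1\}$ labelled so that $x_*,x,y,y_*$ occur in this order on the upper unit semicircle. Suppose the line $L(x,y)$ meets the real axis, at the point $w$, and let $v=L(x,x_* )\cap L(y,y_* )$. Let $S^1(a,r_a)$ be the circle through $x,y$ orthogonal to $S^1$, with $a=i\frac{y(1+|x|^2)-x(1+|y|^2)}{2(x_2y_1-x_1y_2)}$ (where $x=x_1+ix_2$, $y=y_1+iy_2$) and $r_a=\sqrt{|a|^2-1}$. Let $z$ be the point of $S^1\cap S^1(\frac w2,\frac{|w|}{2})$ in $\mathbb{H}^2$, let $n$ be the point of $L(x,y)\cap S^1(\frac w2,\frac{|w|}{2})$ in $\mathbb{H}^2$, let $\{s,t\}=S^1(a,r_a)\cap S^1(\frac w2,\frac{|w|}{2})$, and let $u=L(a)\cap L(x,y)$. Then: (1) $z$ is the hyperbolic midpoint of the hyperbolic segment $J[x,y]$; (2) $n$ is the midpoint of the Euclidean segment $[x,y]$; (3) $v$ lies on the circle $S^1(a,r_a)$; (4) the circle $S^1(a,r_a)$ is orthogonal to the circle $S^1(\frac w2,\frac{|w|}{2})$; (5) $u$ lies on the line $L(s,t)$.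
   Context: $\mathbb{H}^2$ is the upper half plane with boundary the real axis; $S^1$ is the unit circle; $S^1(c,r)$ is the circle with centre $c$ and radius $r$. $L(p,q)$ denotes the line through $p,q$ and $L(p)$ the line through $p$ orthogonal to the real axis. The hyperbolic distance on $\mathbb{H}^2$ satisfies $\cosh\rho(x,y)=1+\frac{|x-y|^2}{2\operatorname{Im}x\operatorname{Im}y}$; $J[x,y]$ is the arc of $S^1$ between $x,y$, and its hyperbolic midpoint is the $z\in J[x,y]$ with $\rho(x,z)=\rho(z,y)$. *)

From Stdlib Require Import Reals.
From Coquelicot Require Import Coquelicot.
Open Scope R_scope.

Definition inH2 (p : C) : Prop := 0 < Im p.

Definition on_circle (c : C) (r : R) (p : C) : Prop := Cmod (p - c)%C = r.

Definition on_S1 (p : C) : Prop := on_circle 0%C 1 p.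

(* p, q, r are collinear; for p <> q this says r lies on the line L(p,q) *)
Definition on_line (p q r : C) : Prop :=
  Re (q - p)%C * Im (r - p)%C - Im (q - p)%C * Re (r - p)%C = 0.

Definition on_vline (p r : C) : Prop := Re r = Re p.

Definition arcosh (c : R) : R := ln (c + sqrt (c ^ 2 - 1)).

Definition hdist (p q : C) : R :=
  arcosh (1 + (Cmod (p - q)%C) ^ 2 / (2 * Im p * Im q)).

Definition in_J (x y p : C) : Prop :=
  on_S1 p /\ inH2 p /\ Rmin (Re x) (Re y) <= Re p <= Rmax (Re x) (Re y).

Definition hyp_midpoint (x y p : C) : Prop :=
  in_J x y p /\ hdist x p = hdist p y.

Definition orth_circles (c1 : C) (r1 : R) (c2 : C) (r2 : R) : Prop :=
  (exists p, on_circle c1 r1 p /\ on_circle c2 r2 p) /\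
  (forall p, on_circle c1 r1 p -> on_circle c2 r2 p ->
     Re (p - c1)%C * Re (p - c2)%C + Im (p - c1)%C * Im (p - c2)%C = 0).

Definition centre_a (x y : C) : C :=
  (Ci * (y * RtoC (1 + Cmod x ^ 2) - x * RtoC (1 + Cmod y ^ 2))
     / RtoC (2 * (Im x * Re y - Re x * Im y)))%C.

Definition radius_a (x y : C) : R := sqrt (Cmod (centre_a x y) ^ 2 - 1).

From Stdlib Require Import Reals Lra Psatz.
From Coquelicot Require Import Coquelicot.
Open Scope R_scope.

(* Parametrize the upper unit semicircle by p = tan (theta / 2) > 0 and let x, y have
   parameters p, q.  Then a = ((1 - pq) / (1 + pq), (p + q) / (1 + pq)) is the pole of
   L(x,y), i.e. L(x,y) is the line a.n = 1; hence w = 1 / Re a and r_a^2 = |a|^2 - 1.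
   The circle with diameter [0, w] meets S^1 on the vertical line through a, at the
   point of parameter sqrt (pq), which is the hyperbolic midpoint since ln p is an
   arclength parameter; it meets L(x,y) at w and at the inverse of a, which is the
   midpoint of the chord.  The lines L(x, x_* ) and L(y, y_* ) cross on that vertical
   line at distance |p - q| / (1 + pq) = r_a from a.  Orthogonality is |a - w/2|^2 = r_a^2 + (w/2)^2, and u has
   the same power |u|^2 - 1 with respect to both circles, so it lies on their radical
   axis L(s,t). *)

Lemma scale_eq_0_iff (k e : R) : k <> 0 -> (k * e = 0 <-> e = 0).
Proof.
  intros Hk; split; intros He.
  - now destruct (Rmult_integral _ _ He).
  - rewrite He; ring.
Qed.

Lemma on_circle_iff (c : C) (r : R) (P : C) : 0 <= r ->
  (on_circle c r P <-> (Re P - Re c) ^ 2 + (Im P - Im c) ^ 2 = r ^ 2).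
Proof.
  intros Hr; unfold on_circle.
  replace ((Re P - Re c) ^ 2 + (Im P - Im c) ^ 2) with (Cmod (P - c) ^ 2)
    by (rewrite Cmod2_alt; destruct P, c; simpl; ring).
  split; intros H.
  - now rewrite H.
  - now rewrite <- (sqrt_pow2 r Hr), <- H, sqrt_pow2 by apply Cmod_ge_0.
Qed.

Lemma on_S1_iff (P : C) : on_S1 P <-> Re P ^ 2 + Im P ^ 2 = 1.
Proof.
  unfold on_S1; rewrite on_circle_iff by lra; cbn [Re Im RtoC fst snd]; split; intros H; lra.
Qed.

Lemma on_diameter_circle_iff (w : R) (P : C) :
  on_circle (RtoC (w / 2)) (Rabs w / 2) P <-> Re P ^ 2 + Im P ^ 2 = w * Re P.
Proof.
  rewrite on_circle_iff by (pose proof (Rabs_pos w); lra); cbn [Re Im RtoC fst snd].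
  replace ((Rabs w / 2) ^ 2) with (Rabs w ^ 2 / 4) by field.
  rewrite pow2_abs; split; intros H; nra.
Qed.

Lemma Cmod_sub_sqr (P c : C) : Cmod (P - c) ^ 2 = (Re P - Re c) ^ 2 + (Im P - Im c) ^ 2.
Proof. rewrite Cmod2_alt; destruct P, c; simpl; ring. Qed.

Lemma orth_circles_of_pythagoras (c1 c2 : C) (r1 r2 : R) : 0 <= r1 -> 0 <= r2 ->
  c1 <> c2 -> Cmod (c2 - c1) ^ 2 = r1 ^ 2 + r2 ^ 2 -> orth_circles c1 r1 c2 r2.
Proof.
  intros Hr1 Hr2 Hc Hd.
  assert (Hs : 0 < r1 ^ 2 + r2 ^ 2).
  { rewrite <- Hd; apply pow_lt, Cmod_gt_0.
    intros E; apply Hc; rewrite <- (Cplus_0_r c1), <- E; ring. }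
  rewrite Cmod_sub_sqr in Hd.
  set (D1 := Re c2 - Re c1) in Hd; set (D2 := Im c2 - Im c1) in Hd.
  split.
  - (* rotate c2 - c1 by the angle of r1 + i r2 and rescale it to length r1 *)
    exists (Re c1 + r1 * (r1 * D1 - r2 * D2) / (r1 ^ 2 + r2 ^ 2),
            Im c1 + r1 * (r1 * D2 + r2 * D1) / (r1 ^ 2 + r2 ^ 2)).
    split; rewrite on_circle_iff by assumption; cbn [Re Im fst snd].
    + replace (_ + _) with (r1 ^ 2 * (D1 ^ 2 + D2 ^ 2) / (r1 ^ 2 + r2 ^ 2)) by (field; lra).
      rewrite Hd; field; lra.
    + replace (_ + _) with (r2 ^ 2 * (D1 ^ 2 + D2 ^ 2) / (r1 ^ 2 + r2 ^ 2))
        by (unfold D1, D2; field; lra).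
      rewrite Hd; field; lra.
  - intros P H1 H2; apply on_circle_iff in H1, H2; try assumption.
    unfold D1, D2 in Hd; destruct P, c1, c2; simpl in *; nra.
Qed.

Definition power (c : C) (r : R) (P : C) : R := Cmod (P - c) ^ 2 - r ^ 2.

Lemma power_on_circle (c : C) (r : R) (P : C) : on_circle c r P -> power c r P = 0.
Proof. unfold power; intros ->; ring. Qed.

Lemma on_line_of_dot_eq (N : C) (k : R) (s t u : C) : N <> 0 ->
  Re N * Re s + Im N * Im s = k -> Re N * Re t + Im N * Im t = k ->
  Re N * Re u + Im N * Im u = k -> on_line s t u.
Proof.
  intros HN Hs Ht Hu; unfold on_line.
  assert (HN2 : 0 < Re N ^ 2 + Im N ^ 2)
    by (rewrite <- Cmod2_alt; apply pow_lt, Cmod_gt_0, HN).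
  apply (scale_eq_0_iff (Re N ^ 2 + Im N ^ 2)); [lra|].
  destruct N as [N1 N2], s as [s1 s2], t as [t1 t2], u as [u1 u2].
  cbn [Re Im fst snd Cminus Cplus Copp] in *.
  (* t - s and u - s are both orthogonal to N, hence parallel *)
  match goal with |- ?l = 0 => replace l with
    ((N1 * (t1 - s1) + N2 * (t2 - s2)) * (N1 * (u2 - s2) - N2 * (u1 - s1))
     - (N1 * (u1 - s1) + N2 * (u2 - s2)) * (N1 * (t2 - s2) - N2 * (t1 - s1))) by ring end.
  replace (N1 * (t1 - s1) + N2 * (t2 - s2)) with 0 by lra.
  replace (N1 * (u1 - s1) + N2 * (u2 - s2)) with 0 by lra.
  ring.
Qed.

Lemma on_line_of_equal_power (c1 c2 : C) (r1 r2 : R) (s t u : C) : c1 <> c2 ->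
  power c1 r1 s = power c2 r2 s -> power c1 r1 t = power c2 r2 t ->
  power c1 r1 u = power c2 r2 u -> on_line s t u.
Proof.
  intros Hc; unfold power; rewrite !Cmod_sub_sqr; intros Hs Ht Hu.
  apply (on_line_of_dot_eq (c2 - c1)
          ((Re c2 ^ 2 + Im c2 ^ 2 - r2 ^ 2 - (Re c1 ^ 2 + Im c1 ^ 2 - r1 ^ 2)) / 2)).
  - intros E; apply Hc; rewrite <- (Cplus_0_r c1), <- E; ring.
  - destruct s, c1, c2; simpl in *; nra.
  - destruct t, c1, c2; simpl in *; nra.
  - destruct u, c1, c2; simpl in *; nra.
Qed.

Definition inversion_S1 (a : C) : C :=
  (Re a / (Re a ^ 2 + Im a ^ 2), Im a / (Re a ^ 2 + Im a ^ 2)).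

(* The line a1 X + a2 Y = 1 is the polar of a = (a1, a2) with respect to S^1; it
   meets the real axis at w.  The circle of centre a and radius ra with
   ra^2 = |a|^2 - 1 is orthogonal to S^1 and passes through the two points where
   the polar meets S^1. *)
Section Polar.

Variables a1 a2 w : R.
Hypothesis polar_w : a1 * w = 1.

Lemma S1_diameter_circle_Re (z : C) : on_S1 z ->
  on_circle (RtoC (w / 2)) (Rabs w / 2) z -> Re z = a1.
Proof.
  rewrite on_S1_iff, on_diameter_circle_iff; intros H1 H2.
  replace a1 with (a1 * (Re z ^ 2 + Im z ^ 2)) by (rewrite H1; ring).
  rewrite H2, <- Rmult_assoc, polar_w; ring.
Qed.

Lemma polar_diameter_circle_inter (n : C) : a2 <> 0 -> a1 * Re n + a2 * Im n = 1 ->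
  on_circle (RtoC (w / 2)) (Rabs w / 2) n -> Im n <> 0 ->
  n = inversion_S1 (a1, a2).
Proof.
  rewrite on_diameter_circle_iff; unfold inversion_S1; destruct n as [n1 n2]; cbn [Re Im fst snd].
  intros Ha2 Hl Hc Hn2.
  assert (Hcirc : a1 * (n1 ^ 2 + n2 ^ 2) = n1) by (rewrite Hc, <- Rmult_assoc, polar_w; ring).
  (* the other intersection point is w itself, on the real axis *)
  assert (Hroots : (a1 * n1 - 1) * ((a1 ^ 2 + a2 ^ 2) * n1 - a1) = 0).
  { replace (_ * _) with (a2 ^ 2 * (a1 * (n1 ^ 2 + n2 ^ 2) - n1)
      - a1 * (a1 * n1 + a2 * n2 - 1) * (a2 * n2 + 1 - a1 * n1)) by ring.
    rewrite Hcirc, Hl; ring. }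
  assert (Ha : 0 < a1 ^ 2 + a2 ^ 2) by nra.
  destruct (Rmult_integral _ _ Hroots) as [H1 | H1].
  - exfalso; apply Hn2, (scale_eq_0_iff a2); lra.
  - assert (Hn1 : n1 = a1 / (a1 ^ 2 + a2 ^ 2)) by (field_simplify_eq; nra).
    f_equal; [exact Hn1|].
    apply (Rmult_eq_reg_l a2); [|exact Ha2].
    replace (a2 * n2) with (1 - a1 * n1) by lra.
    rewrite Hn1; field; lra.
Qed.

Variable ra : R.
Hypothesis radius_ra : ra ^ 2 = a1 ^ 2 + a2 ^ 2 - 1.

Lemma polar_orth_circles : 0 <= ra -> a2 <> 0 ->
  orth_circles (a1, a2) ra (RtoC (w / 2)) (Rabs w / 2).
Proof.
  intros Hra Ha2; apply orth_circles_of_pythagoras.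
  - exact Hra.
  - pose proof (Rabs_pos w); lra.
  - intros E; apply Ha2; exact (f_equal snd E).
  - rewrite Cmod_sub_sqr; cbn [Re Im RtoC fst snd].
    replace ((Rabs w / 2) ^ 2) with (Rabs w ^ 2 / 4) by field.
    rewrite pow2_abs, radius_ra; nra.
Qed.

Lemma polar_equal_power (u : C) : a1 * Re u + a2 * Im u = 1 -> Re u = a1 ->
  power (a1, a2) ra u = power (RtoC (w / 2)) (Rabs w / 2) u.
Proof.
  intros Hl Hu; unfold power; rewrite !Cmod_sub_sqr; cbn [Re Im RtoC fst snd].
  replace ((Rabs w / 2) ^ 2) with (Rabs w ^ 2 / 4) by field.
  rewrite pow2_abs, radius_ra, Hu in *; nra.
Qed.

End Polar.

(* the point of S^1 at angle theta, with p = tan (theta / 2) *)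
Definition semicircle_pt (p : R) : C := ((1 - p ^ 2) / (1 + p ^ 2), 2 * p / (1 + p ^ 2)).

Lemma semicircle_pt_on_S1 (p : R) : on_S1 (semicircle_pt p).
Proof. apply on_S1_iff; cbn [Re Im fst snd semicircle_pt]; field; nra. Qed.

Lemma semicircle_pt_inH2 (p : R) : 0 < p -> inH2 (semicircle_pt p).
Proof. intros Hp; unfold inH2; cbn [Im snd semicircle_pt]; apply Rdiv_lt_0_compat; nra. Qed.

Lemma upper_semicircle_param (x : C) : on_S1 x -> inH2 x ->
  exists p, 0 < p /\ x = semicircle_pt p.
Proof.
  rewrite on_S1_iff; unfold inH2; destruct x as [x1 x2]; cbn [Re Im fst snd].
  intros Hx Hx2; assert (Hx1 : -1 < x1) by nra.
  exists (x2 / (1 + x1)); split; [apply Rdiv_lt_0_compat; lra|].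
  unfold semicircle_pt; f_equal; field_simplify_eq; try split; try lra; nra.
Qed.

(* i.e. hdist = |ln p - ln r|: ln p is an arclength parameter of the geodesic S^1 ∩ H^2 *)
Lemma hdist_semicircle_pt (p r : R) : 0 < p -> 0 < r ->
  hdist (semicircle_pt p) (semicircle_pt r) = arcosh ((p ^ 2 + r ^ 2) / (2 * p * r)).
Proof.
  intros Hp Hr; unfold hdist; f_equal.
  rewrite Cmod_sub_sqr; cbn [Re Im fst snd semicircle_pt].
  field; repeat split; nra.
Qed.

Lemma between_of_mul_nonneg (a b z : R) : 0 <= (z - a) * (b - z) -> Rmin a b <= z <= Rmax a b.
Proof. intros H; unfold Rmin, Rmax; destruct (Rle_dec a b); split; nra. Qed.

Lemma hyp_midpoint_semicircle_pts (p q : R) (z : C) : 0 < p -> 0 < q ->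
  on_S1 z -> inH2 z -> Re z = (1 - p * q) / (1 + p * q) ->
  hyp_midpoint (semicircle_pt p) (semicircle_pt q) z.
Proof.
  intros Hp Hq Hz Hz2 Hzre.
  destruct (upper_semicircle_param z Hz Hz2) as [r [Hr ->]].
  assert (Hrpq : r ^ 2 = p * q).
  { cbn [Re fst semicircle_pt] in Hzre.
    replace (r ^ 2) with (p * q - ((1 - r ^ 2) / (1 + r ^ 2) - (1 - p * q) / (1 + p * q))
                                   * ((1 + r ^ 2) * (1 + p * q) / 2)) by (field; nra).
    rewrite Hzre; ring. }
  split; [split; [|split]|].
  - apply semicircle_pt_on_S1.
  - now apply semicircle_pt_inH2.
  - apply between_of_mul_nonneg; cbn [Re fst semicircle_pt].
    replace (_ * _) with (4 * ((p ^ 2 - r ^ 2) * (r ^ 2 - q ^ 2))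
                          / ((1 + p ^ 2) * (1 + q ^ 2) * (1 + r ^ 2) ^ 2))
      by (field; repeat split; nra).
    rewrite Hrpq; apply Rdiv_le_0_compat; [|nra].
    replace ((p ^ 2 - p * q) * (p * q - q ^ 2)) with (p * q * (p - q) ^ 2) by ring.
    pose proof (pow2_ge_0 (p - q)); nra.
  - rewrite !hdist_semicircle_pt by assumption; f_equal.
    rewrite Hrpq; field; lra.
Qed.

Lemma on_line_semicircle_pts (p q : R) (n : C) : 0 < p -> 0 < q -> p <> q ->
  on_line (semicircle_pt p) (semicircle_pt q) n <->
  (1 - p * q) / (1 + p * q) * Re n + (p + q) / (1 + p * q) * Im n = 1.
Proof.
  intros Hp Hq Hpq; unfold on_line; destruct n as [n1 n2].
  cbn [Re Im fst snd Cminus Cplus Copp semicircle_pt].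
  match goal with |- (?l = 0 <-> _) => replace l with
    (2 * (p - q) * (1 + p * q) / ((1 + p ^ 2) * (1 + q ^ 2))
     * ((1 - p * q) / (1 + p * q) * n1 + (p + q) / (1 + p * q) * n2 - 1))
    by (field; repeat split; nra) end.
  rewrite scale_eq_0_iff
    by (apply Rmult_integral_contrapositive_currified;
        [apply Rmult_integral_contrapositive_currified | apply Rinv_neq_0_compat]; nra).
  split; lra.
Qed.

Lemma on_line_semicircle_pt_m1 (p : R) (n : C) :
  on_line (semicircle_pt p) (RtoC (-1)) n <-> Im n = p * (Re n + 1).
Proof.
  unfold on_line; destruct n as [n1 n2].
  cbn [Re Im fst snd Cminus Cplus Copp semicircle_pt RtoC].
  match goal with |- (?l = 0 <-> _) => replace l with (2 / (1 + p ^ 2) * (p * (n1 + 1) - n2))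
    by (field; nra) end.
  rewrite scale_eq_0_iff
    by (apply Rmult_integral_contrapositive_currified; [lra | apply Rinv_neq_0_compat; nra]).
  split; lra.
Qed.

Lemma on_line_semicircle_pt_1 (p : R) (n : C) : p <> 0 ->
  on_line (semicircle_pt p) (RtoC 1) n <-> p * Im n = 1 - Re n.
Proof.
  intros Hp; unfold on_line; destruct n as [n1 n2].
  cbn [Re Im fst snd Cminus Cplus Copp semicircle_pt RtoC].
  match goal with |- (?l = 0 <-> _) => replace l with (2 * p / (1 + p ^ 2) * (p * n2 + n1 - 1))
    by (field; nra) end.
  rewrite scale_eq_0_iff
    by (apply Rmult_integral_contrapositive_currified;
        [apply Rmult_integral_contrapositive_currified | apply Rinv_neq_0_compat]; nra).
  split; lra.
Qed.

Lemma Cmod_semicircle_pt (p : R) : Cmod (semicircle_pt p) = 1.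
Proof.
  pose proof (semicircle_pt_on_S1 p) as H; unfold on_S1, on_circle in H.
  now replace (semicircle_pt p - 0)%C with (semicircle_pt p) in H by ring.
Qed.

Lemma centre_a_semicircle_pts (p q : R) : 0 < p -> 0 < q -> p <> q ->
  centre_a (semicircle_pt p) (semicircle_pt q)
  = ((1 - p * q) / (1 + p * q), (p + q) / (1 + p * q)).
Proof.
  intros Hp Hq Hpq; unfold centre_a; rewrite !Cmod_semicircle_pt.
  unfold Cdiv, Cmult, Cinv, Cminus, Cplus, Copp, RtoC, Ci, Re, Im, semicircle_pt.
  cbn [fst snd].
  assert (Hdet : (p - q) * (1 + p * q) <> 0)
    by (apply Rmult_integral_contrapositive_currified; nra).
  f_equal; field; repeat split; try nra;
    intros E; apply Hdet; apply (scale_eq_0_iff (2 / ((1 + p ^ 2) * (1 + q ^ 2))));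
    try (apply Rmult_integral_contrapositive_currified; [lra | apply Rinv_neq_0_compat; nra]);
    rewrite <- E; field; nra.
Qed.

Lemma radius_a_semicircle_pts_sqr (p q : R) : 0 < p -> 0 < q -> p <> q ->
  radius_a (semicircle_pt p) (semicircle_pt q) ^ 2
  = ((1 - p * q) / (1 + p * q)) ^ 2 + ((p + q) / (1 + p * q)) ^ 2 - 1.
Proof.
  intros Hp Hq Hpq; unfold radius_a.
  rewrite centre_a_semicircle_pts, Cmod2_alt by assumption; cbn [Re Im fst snd].
  apply pow2_sqrt.
  replace (_ - 1) with ((p - q) ^ 2 / (1 + p * q) ^ 2) by (field; nra).
  apply Rdiv_le_0_compat; [apply pow2_ge_0 | nra].
Qed.

(* the midpoint of a chord of S^1 is the inverse of its pole *)
Lemma midpoint_semicircle_pts (p q : R) : 0 < p -> 0 < q -> p <> q ->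
  ((semicircle_pt p + semicircle_pt q) / 2)%C
  = inversion_S1 (centre_a (semicircle_pt p) (semicircle_pt q)).
Proof.
  intros Hp Hq Hpq; rewrite centre_a_semicircle_pts by assumption.
  unfold inversion_S1, semicircle_pt, Cdiv, Cmult, Cinv, Cplus, RtoC.
  cbn [Re Im fst snd]; f_equal; field; repeat split; nra.
Qed.

Lemma cross_point_on_polar_circle (p q : R) (v : C) : 0 < p -> 0 < q ->
  on_line (semicircle_pt p) (RtoC (-1)) v -> on_line (semicircle_pt q) (RtoC 1) v ->
  (Re v - (1 - p * q) / (1 + p * q)) ^ 2 + (Im v - (p + q) / (1 + p * q)) ^ 2
  = ((1 - p * q) / (1 + p * q)) ^ 2 + ((p + q) / (1 + p * q)) ^ 2 - 1.
Proof.
  intros Hp Hq; rewrite on_line_semicircle_pt_m1, on_line_semicircle_pt_1 by lra.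
  intros Hx Hy.
  assert (Hre : Re v = (1 - p * q) / (1 + p * q)) by (field_simplify_eq; nra).
  rewrite Hx, Hre; field; nra.
Qed.

Theorem proposition3p7 (x y xs ys : C) (w : R) :
  on_S1 x -> inH2 x -> on_S1 y -> inH2 y -> x <> y ->
  ((xs = RtoC (-1) /\ ys = RtoC 1 /\ Re x < Re y) \/
   (xs = RtoC 1 /\ ys = RtoC (-1) /\ Re y < Re x)) ->
  on_line x y (RtoC w) ->
  let a := centre_a x y in
  let ra := radius_a x y in
  let cw := RtoC (w / 2) in
  let rw := Rabs w / 2 in
  (forall z, on_S1 z -> on_circle cw rw z -> inH2 z -> hyp_midpoint x y z) /\
  (forall n, on_line x y n -> on_circle cw rw n -> inH2 n ->
     n = ((x + y) / 2)%C) /\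
  (forall v, on_line x xs v -> on_line y ys v -> on_circle a ra v) /\
  orth_circles a ra cw rw /\
  (forall s t u, s <> t ->
     on_circle a ra s -> on_circle cw rw s ->
     on_circle a ra t -> on_circle cw rw t ->
     on_vline a u -> on_line x y u ->
     on_line s t u).
Proof.
  intros Hx Hx2 Hy Hy2 Hxy Hends Hw a ra cw rw.
  destruct (upper_semicircle_param x Hx Hx2) as [p [Hp ->]].
  destruct (upper_semicircle_param y Hy Hy2) as [q [Hq ->]].
  assert (Hpq : p <> q) by (intros ->; exact (Hxy eq_refl)).
  set (a1 := (1 - p * q) / (1 + p * q)); set (a2 := (p + q) / (1 + p * q)).
  assert (Ha : a = (a1, a2)) by now apply centre_a_semicircle_pts.
  assert (Hra : ra ^ 2 = a1 ^ 2 + a2 ^ 2 - 1) by now apply radius_a_semicircle_pts_sqr.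
  assert (Hra0 : 0 <= ra) by apply sqrt_pos.
  assert (Ha2 : a2 <> 0) by (apply Rgt_not_eq, Rdiv_lt_0_compat; nra).
  assert (Hline : forall n, on_line (semicircle_pt p) (semicircle_pt q) n
                            <-> a1 * Re n + a2 * Im n = 1)
    by (intros n; now apply on_line_semicircle_pts).
  assert (Hpolar : a1 * w = 1) by (apply Hline in Hw; cbn [Re Im RtoC fst snd] in Hw; lra).
  split; [|split; [|split; [|split]]].
  - intros z Hz Hzw Hz2; apply hyp_midpoint_semicircle_pts; try assumption.
    exact (S1_diameter_circle_Re a1 w Hpolar z Hz Hzw).
  - intros n Hn Hnw Hn2; rewrite midpoint_semicircle_pts by assumption.
    change (centre_a _ _) with a; rewrite Ha.
    apply (polar_diameter_circle_inter a1 a2 w Hpolar); try assumption.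
    + now apply Hline.
    + unfold inH2 in Hn2; lra.
  - intros v Hv1 Hv2; rewrite on_circle_iff, Ha, Hra by exact Hra0; cbn [Re Im fst snd].
    destruct Hends as [[-> [-> _]] | [-> [-> _]]].
    + now apply cross_point_on_polar_circle.
    + unfold a1, a2; rewrite (Rmult_comm p q), (Rplus_comm p q).
      now apply cross_point_on_polar_circle.
  - rewrite Ha; now apply polar_orth_circles.
  - intros s t u _ Hs Hsw Ht Htw Hu Hul; rewrite Ha in *.
    apply (on_line_of_equal_power (a1, a2) cw ra rw).
    + intros E; apply Ha2; exact (f_equal snd E).
    + now rewrite !power_on_circle.
    + now rewrite !power_on_circle.
    + apply (polar_equal_power a1 a2 w Hpolar ra Hra); [now apply Hline | exact Hu].
Qed.
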